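(* Let $f\colon M\to\mathbb R^3$ be a constant mean curvature surface ($H=1$) with Gauss map $N$ and coordinate frame $F$, in a conformal coordinate $z$ with induced metric $e^u|dz|^2$ and $Q=\langle f_{zz},N\rangle$. Let $F_\lambda\colon\tilde M\to\mathrm{Gl}(2,\mathbb C)$, $\lambda\in\mathbb C_*$, be an extended frame of $f$, i.e. a solution of \[F_\lambda^{-1}(F_\lambda)_z=\begin{pmatrix}-\frac{u_z}4 & Qe^{-u/2}\\ -\frac\lambda2 e^{u/2} & \frac{u_z}4\end{pmatrix},\qquad F_\lambda^{-1}(F_\lambda)_{\bar z}=\begin{pmatrix}\frac{u_{\bar z}}4 & \frac{\lambda^{-1}}2e^{u/2}\\ -\bar Qe^{-u/2} & -\frac{u_{\bar z}}4\end{pmatrix}\] with $F_{\lambda=1}=F$. Then the associated family of flat connections of $N$ is \[d_\lambda=F\cdot d^{F_\lambda}=F\circ\big(d+F_\lambda^{-1}dF_\lambda\big)\circ F^{-1}.\]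
   Context: Identify $\mathbb R^4=\mathbb H$, $\mathbb R^3=\mathrm{Im}\,\mathbb H$, $S^2=\{n\in\mathrm{Im}\,\mathbb H:n^2=-1\}$; identify $\mathbb H$ with matrices via $a_0+ja_1\mapsto\begin{pmatrix}a_0&-\bar a_1\\ a_1&\bar a_0\end{pmatrix}$ ($a_0,a_1\in\mathbb C$), which is left multiplication on $\mathbb C^2=(\mathbb H,I)$, $I$ = right multiplication by $i$, with basis $1,j$; then $\langle v,w\rangle=-\frac12\mathrm{tr}(vw)$ on $\mathbb R^3$. For a conformal immersion $f$ with conformal coordinate $z=x+iy$ and metric $e^u$, the coordinate frame is the (up to sign unique) $F\colon\tilde M\to SU(2)$ with $e^{-u/2}f_x=-iF\sigma_1F^{-1}$, $e^{-u/2}f_y=-iF\sigma_2F^{-1}$, $N=-iF\sigma_3F^{-1}$ ($\sigma_l$ the Pauli matrices), where the Gauss map satisfies $*df=N\,df=-df\,N$ with $*\omega(X)=\omega(J_MX)$. Mean curvature normalized $H=1$, so $(dN)'=\frac12(dN-N*dN)=-df$. $\underline{\mathbb H}=M\times\mathbb H$ has trivial connection $d$; $J$ is left multiplication by $N$, $A=\frac14(J\,dJ+*dJ)$, $A^{(1,0)}=\frac12(A-I*A)$, $A^{(0,1)}=\frac12(A+I*A)$; the associated family is $d_\lambda=d+(\lambda-1)A^{(1,0)}+(\lambda^{-1}-1)A^{(0,1)}$, $\lambda\in\mathbb C_*$. *)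

From Stdlib Require Import Reals.
From Coquelicot Require Import Coquelicot.
Open Scope R_scope.

Definition Ci : C := (0, 1).

(** 2x2 complex matrices (quaternions act on C^2 = (H, I) with basis 1, j
    by left multiplication; I = right multiplication by i = scalar i). *)
Record M2 := mkM2 { a11 : C; a12 : C; a21 : C; a22 : C }.
Definition V2 := (C * C)%type.

Definition M2add (A B : M2) : M2 :=
  mkM2 (Cplus (a11 A) (a11 B)) (Cplus (a12 A) (a12 B))
       (Cplus (a21 A) (a21 B)) (Cplus (a22 A) (a22 B)).
Definition M2scal (c : C) (A : M2) : M2 :=
  mkM2 (Cmult c (a11 A)) (Cmult c (a12 A)) (Cmult c (a21 A)) (Cmult c (a22 A)).
Definition M2opp (A : M2) : M2 := M2scal (RtoC (-1)) A.
Definition M2sub (A B : M2) : M2 := M2add A (M2opp B).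
Definition M2mul (A B : M2) : M2 :=
  mkM2 (Cplus (Cmult (a11 A) (a11 B)) (Cmult (a12 A) (a21 B)))
       (Cplus (Cmult (a11 A) (a12 B)) (Cmult (a12 A) (a22 B)))
       (Cplus (Cmult (a21 A) (a11 B)) (Cmult (a22 A) (a21 B)))
       (Cplus (Cmult (a21 A) (a12 B)) (Cmult (a22 A) (a22 B))).
Definition M2det (A : M2) : C :=
  Cminus (Cmult (a11 A) (a22 A)) (Cmult (a12 A) (a21 A)).
Definition M2tr (A : M2) : C := Cplus (a11 A) (a22 A).
(** inverse via the adjugate (meaningful when det <> 0) *)
Definition M2inv (A : M2) : M2 :=
  M2scal (Cinv (M2det A))
    (mkM2 (a22 A) (Copp (a12 A)) (Copp (a21 A)) (a11 A)).
Definition M2star (A : M2) : M2 :=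
  mkM2 (Cconj (a11 A)) (Cconj (a21 A)) (Cconj (a12 A)) (Cconj (a22 A)).
Definition M2one : M2 := mkM2 (RtoC 1) (RtoC 0) (RtoC 0) (RtoC 1).
Definition M2app (A : M2) (v : V2) : V2 :=
  (Cplus (Cmult (a11 A) (fst v)) (Cmult (a12 A) (snd v)),
   Cplus (Cmult (a21 A) (fst v)) (Cmult (a22 A) (snd v))).
Definition V2add (v w : V2) : V2 := (Cplus (fst v) (fst w), Cplus (snd v) (snd w)).

Definition sigma1 : M2 := mkM2 (RtoC 0) (RtoC 1) (RtoC 1) (RtoC 0).
Definition sigma2 : M2 := mkM2 (RtoC 0) (Copp Ci) Ci (RtoC 0).
Definition sigma3 : M2 := mkM2 (RtoC 1) (RtoC 0) (RtoC 0) (RtoC (-1)).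

(** The quaternion a0 + j a1 as the matrix [[a0, -conj a1],[a1, conj a0]];
    Im H = those with Re a0 = 0. *)
Definition quat_mx (a0 a1 : C) : M2 := mkM2 a0 (Copp (Cconj a1)) a1 (Cconj a0).
Definition isImH (A : M2) : Prop :=
  exists a0 a1 : C, A = quat_mx a0 a1 /\ Re a0 = 0.
Definition isSU2 (A : M2) : Prop :=
  M2mul A (M2star A) = M2one /\ M2det A = RtoC 1.

(** Euclidean inner product on Im H, <v,w> = -1/2 tr(vw), extended complex
    bilinearly. *)
Definition ip (v w : M2) : C := Cmult (RtoC (-1/2)) (M2tr (M2mul v w)).

Definition exC (g : R -> C) (t : R) : Prop :=
  ex_derive (fun s => fst (g s)) t /\ ex_derive (fun s => snd (g s)) t.
Definition derC (g : R -> C) (t : R) : C :=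
  (Derive (fun s => fst (g s)) t, Derive (fun s => snd (g s)) t).

(** Fields on the coordinate domain (x, y), z = x + i y. *)
Definition Field := R -> R -> M2.
Definition Sect := R -> R -> V2.

Definition dx (G : Field) : Field := fun x y =>
  mkM2 (derC (fun t => a11 (G t y)) x) (derC (fun t => a12 (G t y)) x)
       (derC (fun t => a21 (G t y)) x) (derC (fun t => a22 (G t y)) x).
Definition dy (G : Field) : Field := fun x y =>
  mkM2 (derC (fun t => a11 (G x t)) y) (derC (fun t => a12 (G x t)) y)
       (derC (fun t => a21 (G x t)) y) (derC (fun t => a22 (G x t)) y).
Definition ex_dx (G : Field) (x y : R) : Prop :=
  exC (fun t => a11 (G t y)) x /\ exC (fun t => a12 (G t y)) x /\
  exC (fun t => a21 (G t y)) x /\ exC (fun t => a22 (G t y)) x.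
Definition ex_dy (G : Field) (x y : R) : Prop :=
  exC (fun t => a11 (G x t)) y /\ exC (fun t => a12 (G x t)) y /\
  exC (fun t => a21 (G x t)) y /\ exC (fun t => a22 (G x t)) y.
Definition dz (G : Field) : Field := fun x y =>
  M2scal (RtoC (1/2)) (M2sub (dx G x y) (M2scal Ci (dy G x y))).
Definition dzb (G : Field) : Field := fun x y =>
  M2scal (RtoC (1/2)) (M2add (dx G x y) (M2scal Ci (dy G x y))).

Definition sdx (s : Sect) : Sect := fun x y =>
  (derC (fun t => fst (s t y)) x, derC (fun t => snd (s t y)) x).
Definition sdy (s : Sect) : Sect := fun x y =>
  (derC (fun t => fst (s x t)) y, derC (fun t => snd (s x t)) y).
Definition ex_sd (s : Sect) (x y : R) : Prop :=
  exC (fun t => fst (s t y)) x /\ exC (fun t => snd (s t y)) x /\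
  exC (fun t => fst (s x t)) y /\ exC (fun t => snd (s x t)) y.

Definition rdz (u : R -> R -> R) (x y : R) : C :=
  Cmult (RtoC (1/2)) (Cminus (RtoC (Derive (fun t => u t y) x))
                             (Cmult Ci (RtoC (Derive (fun t => u x t) y)))).
Definition rdzb (u : R -> R -> R) (x y : R) : C :=
  Cmult (RtoC (1/2)) (Cplus (RtoC (Derive (fun t => u t y) x))
                            (Cmult Ci (RtoC (Derive (fun t => u x t) y)))).

Definition open2 (U : R -> R -> Prop) : Prop :=
  forall x y, U x y -> exists eps : R, 0 < eps /\
    forall x' y', Rabs (x' - x) < eps -> Rabs (y' - y) < eps -> U x' y'.

(** Hopf differential coefficient Q = <f_zz, N>, with
    f_zz = 1/4 (f_xx - 2 i f_xy - f_yy). *)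
Definition hopfQ (f N : Field) (x y : R) : C :=
  ip (M2scal (RtoC (1/4))
        (M2sub (M2sub (dx (dx f) x y) (M2scal (RtoC 2) (M2scal Ci (dy (dx f) x y))))
               (dy (dy f) x y)))
     (N x y).

Definition meanH (f N : Field) (u : R -> R -> R) (x y : R) : C :=
  Cmult (RtoC (/2 * exp (- u x y)))
        (Cplus (ip (dx (dx f) x y) (N x y)) (ip (dy (dy f) x y) (N x y))).

Definition eu2 (u : R -> R -> R) (x y : R) : C := RtoC (exp (u x y / 2)).
Definition emu2 (u : R -> R -> R) (x y : R) : C := RtoC (exp (- u x y / 2)).

(** The right-hand sides of the extended frame equations. *)
Definition Ulam (lam : C) (u : R -> R -> R) (Q : R -> R -> C) (x y : R) : M2 :=
  mkM2 (Cmult (RtoC (-1/4)) (rdz u x y)) (Cmult (Q x y) (emu2 u x y))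
       (Cmult (Cmult (RtoC (-1/2)) lam) (eu2 u x y)) (Cmult (RtoC (1/4)) (rdz u x y)).
Definition Vlam (lam : C) (u : R -> R -> R) (Q : R -> R -> C) (x y : R) : M2 :=
  mkM2 (Cmult (RtoC (1/4)) (rdzb u x y)) (Cmult (Cmult (RtoC (1/2)) (Cinv lam)) (eu2 u x y))
       (Copp (Cmult (Cconj (Q x y)) (emu2 u x y))) (Cmult (RtoC (-1/4)) (rdzb u x y)).

(** Connection forms on the trivial bundle M x H, J = left mult by N.
    A = 1/4 (J dJ + *dJ), with *w(X) = w(J_M X), J_M d/dx = d/dy,
    J_M d/dy = - d/dx. *)
Definition Ax (N : Field) : Field := fun x y =>
  M2scal (RtoC (1/4)) (M2add (M2mul (N x y) (dx N x y)) (dy N x y)).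
Definition Ay (N : Field) : Field := fun x y =>
  M2scal (RtoC (1/4)) (M2sub (M2mul (N x y) (dy N x y)) (dx N x y)).
Definition A10x (N : Field) : Field := fun x y =>
  M2scal (RtoC (1/2)) (M2sub (Ax N x y) (M2scal Ci (Ay N x y))).
Definition A10y (N : Field) : Field := fun x y =>
  M2scal (RtoC (1/2)) (M2sub (Ay N x y) (M2scal Ci (M2opp (Ax N x y)))).
Definition A01x (N : Field) : Field := fun x y =>
  M2scal (RtoC (1/2)) (M2add (Ax N x y) (M2scal Ci (Ay N x y))).
Definition A01y (N : Field) : Field := fun x y =>
  M2scal (RtoC (1/2)) (M2add (Ay N x y) (M2scal Ci (M2opp (Ax N x y)))).

(** d_lambda = d + (lambda - 1) A^(1,0) + (lambda^-1 - 1) A^(0,1),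
    applied to a section s; returns (d_lambda s)(d/dx), (d_lambda s)(d/dy). *)
Definition dlam_conn (N : Field) (lam : C) (s : Sect) (x y : R) : V2 * V2 :=
  let cx := M2add (M2scal (Cminus lam (RtoC 1)) (A10x N x y))
                  (M2scal (Cminus (Cinv lam) (RtoC 1)) (A01x N x y)) in
  let cy := M2add (M2scal (Cminus lam (RtoC 1)) (A10y N x y))
                  (M2scal (Cminus (Cinv lam) (RtoC 1)) (A01y N x y)) in
  (V2add (sdx s x y) (M2app cx (s x y)), V2add (sdy s x y) (M2app cy (s x y))).

(** F . d^G := F o (d + G^-1 dG) o F^-1, applied to a section s. *)
Definition gauge_conn (F G : Field) (s : Sect) (x y : R) : V2 * V2 :=
  let t : Sect := fun x y => M2app (M2inv (F x y)) (s x y) in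
  (M2app (F x y) (V2add (sdx t x y) (M2app (M2mul (M2inv (G x y)) (dx G x y)) (t x y))),
   M2app (F x y) (V2add (sdy t x y) (M2app (M2mul (M2inv (G x y)) (dy G x y)) (t x y)))).

From Pilot Require Import Defs.
From Stdlib Require Import Reals Lra.
From Coquelicot Require Import Coquelicot.
Open Scope R_scope.

(* In the gauge of the coordinate frame everything is explicit: F^-1 dF = alpha_1 with
   alpha_lam = U_lam dz + V_lam dzbar, and N = F (-i sigma3) F^-1, so that F^-1 (dN) F is the
   commutator [alpha_1, -i sigma3].  Forming A, A^(1,0) and A^(0,1) commutes with conjugation
   by F in SL(2,C), hence F^-1 o d_lam o F = d + alpha_1 + (lam - 1) A0^(1,0) + (lam^-1 - 1) A0^(0,1),
   where A0 is built from -i sigma3 and its derivative.  A direct computation shows that A0^(1,0)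
   picks out the lower-left entry of U_1 and A0^(0,1) the upper-right entry of V_1, which are
   exactly the entries through which U_lam and V_lam depend on lam.  Therefore
   F^-1 o d_lam o F = d + alpha_lam = d^(F_lam). *)

Definition M2adj (A : M2) : M2 := mkM2 (a22 A) (Copp (a12 A)) (Copp (a21 A)) (a11 A).

Definition M2conj (F X : M2) : M2 := M2mul (M2mul F X) (M2adj F).

Ltac entrywise :=
  repeat match goal with
  | A : M2 |- _ => destruct A
  | v : V2 |- _ => destruct v
  | c : C |- _ => destruct c
  end;
  cbv beta iota delta [M2adj M2conj M2add M2sub M2opp M2scal M2mul M2app V2add M2det M2tr M2one
    sigma1 sigma2 sigma3 a11 a12 a21 a22 fst snd
    Cmult Cplus Copp Cminus Cconj Pilot.Defs.Ci Coquelicot.Complex.Ci RtoC];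
  repeat match goal with
  | |- mkM2 _ _ _ _ = mkM2 _ _ _ _ => f_equal
  | |- (_, _) = (_, _) => f_equal
  end;
  field.

(* Coquelicot's generic rules, specialised to R -> R: applying the generic ones directly to
   components of C-valued functions makes unification diverge. *)
Lemma is_derive_R_mult (f g : R -> R) t df dg : is_derive f t df -> is_derive g t dg ->
  is_derive (fun s => f s * g s) t (df * g t + f t * dg).
Proof. intros; apply (is_derive_mult f g); auto; intros; apply Rmult_comm. Qed.

Lemma is_derive_R_plus (f g : R -> R) t df dg : is_derive f t df -> is_derive g t dg ->
  is_derive (fun s => f s + g s) t (df + dg).
Proof. intros; apply (is_derive_plus f g); auto. Qed.

Lemma is_derive_R_minus (f g : R -> R) t df dg : is_derive f t df -> is_derive g t dg ->
  is_derive (fun s => f s - g s) t (df - dg).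
Proof. intros; apply (is_derive_minus f g); auto. Qed.

Lemma is_derive_R_opp (f : R -> R) t df : is_derive f t df -> is_derive (fun s => - f s) t (- df).
Proof. intros; apply (is_derive_opp f); auto. Qed.

Lemma is_derive_R_const (a t : R) : is_derive (fun _ : R => a) t 0.
Proof. exact (is_derive_const a t). Qed.

Lemma is_derive_R_eq (f : R -> R) t d d' : is_derive f t d -> d = d' :> R -> is_derive f t d'.
Proof. intros H <-; exact H. Qed.

Definition is_derive_C (g : R -> C) (t : R) (d : C) : Prop :=
  is_derive (fun s => fst (g s)) t (fst d) /\ is_derive (fun s => snd (g s)) t (snd d).

Lemma is_derive_C_mult g h t dg dh : is_derive_C g t dg -> is_derive_C h t dh ->
  is_derive_C (fun s => Cmult (g s) (h s)) t (Cplus (Cmult dg (h t)) (Cmult (g t) dh)).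
Proof.
  intros [g1 g2] [h1 h2]; split; simpl.
  - eapply is_derive_R_eq; [apply is_derive_R_minus; apply is_derive_R_mult; eauto | cbv beta; ring].
  - eapply is_derive_R_eq; [apply is_derive_R_plus; apply is_derive_R_mult; eauto | cbv beta; ring].
Qed.

Lemma is_derive_C_plus g h t dg dh : is_derive_C g t dg -> is_derive_C h t dh ->
  is_derive_C (fun s => Cplus (g s) (h s)) t (Cplus dg dh).
Proof. intros [g1 g2] [h1 h2]; split; apply is_derive_R_plus; auto. Qed.

Lemma is_derive_C_opp g t dg : is_derive_C g t dg -> is_derive_C (fun s => Copp (g s)) t (Copp dg).
Proof. intros [g1 g2]; split; apply is_derive_R_opp; auto. Qed.

Lemma is_derive_C_const (c : C) t : is_derive_C (fun _ => c) t (RtoC 0).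
Proof. split; apply is_derive_R_const. Qed.

Lemma is_derive_C_ext_loc g h t d :
  locally t (fun s => g s = h s) -> is_derive_C g t d -> is_derive_C h t d.
Proof.
  intros L [g1 g2]; split; eapply is_derive_ext_loc; eauto;
    eapply filter_imp; eauto; intros s E; simpl; now rewrite E.
Qed.

Lemma is_derive_C_derC g t : exC g t -> is_derive_C g t (derC g t).
Proof. intros [g1 g2]; split; apply Derive_correct; auto. Qed.

Lemma derC_unique g t d : is_derive_C g t d -> derC g t = d.
Proof.
  intros [g1 g2]; unfold derC.
  apply injective_projections; apply is_derive_unique; assumption.
Qed.

Lemma is_derive_C_eq g t d d' : is_derive_C g t d -> d = d' -> is_derive_C g t d'.
Proof. intros H <-; exact H. Qed.

Definition is_derive_M2 (G : R -> M2) (t : R) (D : M2) : Prop :=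
  is_derive_C (fun s => a11 (G s)) t (a11 D) /\ is_derive_C (fun s => a12 (G s)) t (a12 D) /\
  is_derive_C (fun s => a21 (G s)) t (a21 D) /\ is_derive_C (fun s => a22 (G s)) t (a22 D).

Definition is_derive_V2 (v : R -> V2) (t : R) (d : V2) : Prop :=
  is_derive_C (fun s => fst (v s)) t (fst d) /\ is_derive_C (fun s => snd (v s)) t (snd d).

Lemma is_derive_M2_mul G H t DG DH : is_derive_M2 G t DG -> is_derive_M2 H t DH ->
  is_derive_M2 (fun s => M2mul (G s) (H s)) t (M2add (M2mul DG (H t)) (M2mul (G t) DH)).
Proof.
  intros (g1 & g2 & g3 & g4) (h1 & h2 & h3 & h4).
  refine (conj _ (conj _ (conj _ _))); simpl;
    (eapply is_derive_C_eq; [apply is_derive_C_plus; apply is_derive_C_mult; eauto |]);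
    cbv beta; generalize (G t) (H t); intros; entrywise.
Qed.

Lemma is_derive_M2_const A t : is_derive_M2 (fun _ => A) t (mkM2 (RtoC 0) (RtoC 0) (RtoC 0) (RtoC 0)).
Proof. refine (conj _ (conj _ (conj _ _))); apply is_derive_C_const. Qed.

Lemma is_derive_M2_adj G t D : is_derive_M2 G t D -> is_derive_M2 (fun s => M2adj (G s)) t (M2adj D).
Proof. intros (g1 & g2 & g3 & g4); refine (conj _ (conj _ (conj _ _))); simpl; try apply is_derive_C_opp; assumption. Qed.

Lemma is_derive_V2_app G v t DG dv : is_derive_M2 G t DG -> is_derive_V2 v t dv ->
  is_derive_V2 (fun s => M2app (G s) (v s)) t (V2add (M2app DG (v t)) (M2app (G t) dv)).
Proof.
  intros (g1 & g2 & g3 & g4) (h1 & h2).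
  split; simpl;
    (eapply is_derive_C_eq; [apply is_derive_C_plus; apply is_derive_C_mult; eauto |]);
    cbv beta; generalize (G t) (v t); intros; entrywise.
Qed.

Lemma is_derive_M2_conj F X t D : is_derive_M2 F t D ->
  is_derive_M2 (fun s => M2conj (F s) X) t
    (M2add (M2mul (M2mul D X) (M2adj (F t))) (M2mul (M2mul (F t) X) (M2adj D))).
Proof.
  intros HD.
  replace (M2add _ _) with
    (M2add (M2mul (M2add (M2mul D X) (M2mul (F t) (mkM2 (RtoC 0) (RtoC 0) (RtoC 0) (RtoC 0))))
                  (M2adj (F t)))
           (M2mul (M2mul (F t) X) (M2adj D))).
  - apply is_derive_M2_mul; [apply is_derive_M2_mul | apply is_derive_M2_adj];
      auto using is_derive_M2_const.
  - generalize (F t); intros; entrywise.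
Qed.

Lemma is_derive_M2_ext_loc G H t D :
  locally t (fun s => G s = H s) -> is_derive_M2 G t D -> is_derive_M2 H t D.
Proof.
  intros L (g1 & g2 & g3 & g4); refine (conj _ (conj _ (conj _ _))); eapply is_derive_C_ext_loc; eauto;
    eapply filter_imp; eauto; intros s E; simpl; now rewrite E.
Qed.

Lemma is_derive_V2_ext_loc v w t d :
  locally t (fun s => v s = w s) -> is_derive_V2 v t d -> is_derive_V2 w t d.
Proof.
  intros L (g1 & g2); split; eapply is_derive_C_ext_loc; eauto;
    eapply filter_imp; eauto; intros s E; simpl; now rewrite E.
Qed.

Lemma is_derive_M2_dx G x y : ex_dx G x y -> is_derive_M2 (fun t => G t y) x (dx G x y).
Proof. intros (h1 & h2 & h3 & h4); refine (conj _ (conj _ (conj _ _))); apply is_derive_C_derC; assumption. Qed.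

Lemma is_derive_M2_dy G x y : ex_dy G x y -> is_derive_M2 (fun t => G x t) y (dy G x y).
Proof. intros (h1 & h2 & h3 & h4); refine (conj _ (conj _ (conj _ _))); apply is_derive_C_derC; assumption. Qed.

Lemma is_derive_V2_sdx s x y : ex_sd s x y -> is_derive_V2 (fun t => s t y) x (sdx s x y).
Proof. intros (h1 & h2 & h3 & h4); split; apply is_derive_C_derC; assumption. Qed.

Lemma is_derive_V2_sdy s x y : ex_sd s x y -> is_derive_V2 (fun t => s x t) y (sdy s x y).
Proof. intros (h1 & h2 & h3 & h4); split; apply is_derive_C_derC; assumption. Qed.

Lemma open2_locally_x (U : R -> R -> Prop) x y : open2 U -> U x y -> locally x (fun t => U t y).
Proof.
  intros HU Hxy; destruct (HU x y Hxy) as [eps [Heps HU']]; exists (mkposreal eps Heps).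
  intros t Ht; apply HU'; [exact Ht | rewrite Rminus_diag, Rabs_R0; exact Heps].
Qed.

Lemma open2_locally_y (U : R -> R -> Prop) x y : open2 U -> U x y -> locally y (fun t => U x t).
Proof.
  intros HU Hxy; destruct (HU x y Hxy) as [eps [Heps HU']]; exists (mkposreal eps Heps).
  intros t Ht; apply HU'; [rewrite Rminus_diag, Rabs_R0; exact Heps | exact Ht].
Qed.


Lemma Cinv_1 : Cinv (RtoC 1) = RtoC 1.
Proof. apply injective_projections; unfold Cinv, RtoC; simpl; field. Qed.

Lemma M2inv_det1 A : M2det A = RtoC 1 -> M2inv A = M2adj A.
Proof. intros HA; unfold M2inv; rewrite HA, Cinv_1; entrywise. Qed.

Lemma M2mul_adj_r A : M2mul A (M2adj A) = M2scal (M2det A) M2one.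
Proof. entrywise. Qed.

Lemma M2mul_adj_cancel A B : M2det A = RtoC 1 -> M2mul A (M2mul (M2adj A) B) = B.
Proof.
  intros HA; transitivity (M2mul (M2mul A (M2adj A)) B); [entrywise |].
  rewrite M2mul_adj_r, HA; entrywise.
Qed.

Lemma M2mul_inv_det1 G D P : M2det G = RtoC 1 -> M2mul (M2inv G) D = P -> D = M2mul G P.
Proof. intros HG <-; rewrite M2inv_det1 by exact HG; symmetry; apply M2mul_adj_cancel, HG. Qed.

Lemma M2conj_mul F X Y : M2det F = RtoC 1 ->
  M2mul (M2conj F X) (M2conj F Y) = M2conj F (M2mul X Y).
Proof.
  intros HF; transitivity (M2scal (M2det F) (M2conj F (M2mul X Y)));
    [entrywise | rewrite HF; entrywise].
Qed.

Lemma M2conj_add F X Y : M2add (M2conj F X) (M2conj F Y) = M2conj F (M2add X Y).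
Proof. entrywise. Qed.

Lemma M2conj_sub F X Y : M2sub (M2conj F X) (M2conj F Y) = M2conj F (M2sub X Y).
Proof. entrywise. Qed.

Lemma M2conj_scal F c X : M2scal c (M2conj F X) = M2conj F (M2scal c X).
Proof. entrywise. Qed.

Lemma M2conj_opp F X : M2opp (M2conj F X) = M2conj F (M2opp X).
Proof. entrywise. Qed.

Lemma M2conj_derivative_frame F P X :
  M2add (M2mul (M2mul (M2mul F P) X) (M2adj F)) (M2mul (M2mul F X) (M2adj (M2mul F P))) =
  M2conj F (M2add (M2mul P X) (M2mul X (M2adj P))).
Proof. entrywise. Qed.

Lemma traceless_form P : M2tr P = RtoC 0 -> P = mkM2 (a11 P) (a12 P) (a21 P) (Copp (a11 P)).
Proof.
  destruct P as [[a a'] b c [d d']]; unfold M2tr, RtoC; simpl; intros H.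
  injection H as H H'; f_equal; apply injective_projections; simpl; lra.
Qed.

Definition Aform_x (n nx ny : M2) : M2 := M2scal (RtoC (1/4)) (M2add (M2mul n nx) ny).
Definition Aform_y (n nx ny : M2) : M2 := M2scal (RtoC (1/4)) (M2sub (M2mul n ny) nx).

Definition dlam_coef_x (lam : C) (n nx ny : M2) : M2 :=
  M2add (M2scal (Cminus lam (RtoC 1))
           (M2scal (RtoC (1/2)) (M2sub (Aform_x n nx ny) (M2scal Ci (Aform_y n nx ny)))))
        (M2scal (Cminus (Cinv lam) (RtoC 1))
           (M2scal (RtoC (1/2)) (M2add (Aform_x n nx ny) (M2scal Ci (Aform_y n nx ny))))).
Definition dlam_coef_y (lam : C) (n nx ny : M2) : M2 :=
  M2add (M2scal (Cminus lam (RtoC 1))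
           (M2scal (RtoC (1/2)) (M2sub (Aform_y n nx ny) (M2scal Ci (M2opp (Aform_x n nx ny))))))
        (M2scal (Cminus (Cinv lam) (RtoC 1))
           (M2scal (RtoC (1/2)) (M2add (Aform_y n nx ny) (M2scal Ci (M2opp (Aform_x n nx ny)))))).

Lemma dlam_conn_coef N lam s x y : dlam_conn N lam s x y =
  (V2add (sdx s x y) (M2app (dlam_coef_x lam (N x y) (dx N x y) (dy N x y)) (s x y)),
   V2add (sdy s x y) (M2app (dlam_coef_y lam (N x y) (dx N x y) (dy N x y)) (s x y))).
Proof. reflexivity. Qed.

Section Conjugation.

Variable F : M2.
Hypothesis F_det1 : M2det F = RtoC 1.

Lemma Aform_x_conj n nx ny :
  Aform_x (M2conj F n) (M2conj F nx) (M2conj F ny) = M2conj F (Aform_x n nx ny).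
Proof. unfold Aform_x; rewrite M2conj_mul, M2conj_add, M2conj_scal by exact F_det1; reflexivity. Qed.

Lemma Aform_y_conj n nx ny :
  Aform_y (M2conj F n) (M2conj F nx) (M2conj F ny) = M2conj F (Aform_y n nx ny).
Proof. unfold Aform_y; rewrite M2conj_mul, M2conj_sub, M2conj_scal by exact F_det1; reflexivity. Qed.

Lemma dlam_coef_x_conj lam n nx ny :
  dlam_coef_x lam (M2conj F n) (M2conj F nx) (M2conj F ny) = M2conj F (dlam_coef_x lam n nx ny).
Proof.
  unfold dlam_coef_x; rewrite Aform_x_conj, Aform_y_conj.
  rewrite !M2conj_scal, M2conj_sub, M2conj_add, !M2conj_scal, M2conj_add; reflexivity.
Qed.

Lemma dlam_coef_y_conj lam n nx ny :
  dlam_coef_y lam (M2conj F n) (M2conj F nx) (M2conj F ny) = M2conj F (dlam_coef_y lam n nx ny).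
Proof.
  unfold dlam_coef_y; rewrite Aform_x_conj, Aform_y_conj.
  rewrite !M2conj_opp, !M2conj_scal, M2conj_sub, M2conj_add, !M2conj_scal, M2conj_add; reflexivity.
Qed.

End Conjugation.

Definition Nframe : M2 := M2scal (Copp Ci) sigma3.

Definition dN_frame (P : M2) : M2 := M2add (M2mul P Nframe) (M2mul Nframe (M2adj P)).

Definition M2lower (A : M2) : M2 := mkM2 (RtoC 0) (RtoC 0) (a21 A) (RtoC 0).
Definition M2upper (A : M2) : M2 := mkM2 (RtoC 0) (a12 A) (RtoC 0) (RtoC 0).

Lemma gauss_map_frame F : M2det F = RtoC 1 ->
  M2scal (Copp Ci) (M2mul (M2mul F sigma3) (M2inv F)) = M2conj F Nframe.
Proof. intros HF; rewrite M2inv_det1 by exact HF; unfold Nframe; entrywise. Qed.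

Lemma dN_frame_traceless P : M2tr P = RtoC 0 ->
  dN_frame P = mkM2 (RtoC 0) (Cmult (Cmult (RtoC 2) Ci) (a12 P))
                    (Copp (Cmult (Cmult (RtoC 2) Ci) (a21 P))) (RtoC 0).
Proof. intros HP; rewrite (traceless_form P HP); unfold dN_frame, Nframe; entrywise. Qed.

Lemma dlam_coef_x_offdiag lam nx1 nx2 ny1 ny2 :
  dlam_coef_x lam Nframe (mkM2 (RtoC 0) nx1 nx2 (RtoC 0)) (mkM2 (RtoC 0) ny1 ny2 (RtoC 0)) =
  mkM2 (RtoC 0) (Cmult (Cmult (Cminus (Cinv lam) (RtoC 1)) (RtoC (1/4))) (Cminus ny1 (Cmult Ci nx1)))
       (Cmult (Cmult (Cminus lam (RtoC 1)) (RtoC (1/4))) (Cplus (Cmult Ci nx2) ny2)) (RtoC 0).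
Proof. unfold dlam_coef_x, Aform_x, Aform_y, Nframe; generalize (Cinv lam); intros; entrywise. Qed.

Lemma dlam_coef_x_frame lam U V : M2tr U = RtoC 0 -> M2tr V = RtoC 0 ->
  dlam_coef_x lam Nframe (dN_frame (M2add U V)) (dN_frame (M2scal Ci (M2sub U V))) =
  M2add (M2scal (Cminus lam (RtoC 1)) (M2lower U))
        (M2scal (Cminus (Cinv lam) (RtoC 1)) (M2upper V)).
Proof.
  intros HU HV; rewrite (traceless_form U HU), (traceless_form V HV).
  rewrite !dN_frame_traceless, dlam_coef_x_offdiag by entrywise.
  unfold M2lower, M2upper; generalize (Cinv lam); intros; entrywise.
Qed.

Lemma dlam_coef_y_offdiag lam nx1 nx2 ny1 ny2 :
  dlam_coef_y lam Nframe (mkM2 (RtoC 0) nx1 nx2 (RtoC 0)) (mkM2 (RtoC 0) ny1 ny2 (RtoC 0)) =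
  mkM2 (RtoC 0) (Copp (Cmult (Cmult (Cminus (Cinv lam) (RtoC 1)) (RtoC (1/4))) (Cplus nx1 (Cmult Ci ny1))))
       (Cmult (Cmult (Cminus lam (RtoC 1)) (RtoC (1/4))) (Cminus (Cmult Ci ny2) nx2)) (RtoC 0).
Proof. unfold dlam_coef_y, Aform_x, Aform_y, Nframe; generalize (Cinv lam); intros; entrywise. Qed.

Lemma dlam_coef_y_frame lam U V : M2tr U = RtoC 0 -> M2tr V = RtoC 0 ->
  dlam_coef_y lam Nframe (dN_frame (M2add U V)) (dN_frame (M2scal Ci (M2sub U V))) =
  M2scal Ci (M2sub (M2scal (Cminus lam (RtoC 1)) (M2lower U))
                   (M2scal (Cminus (Cinv lam) (RtoC 1)) (M2upper V))).
Proof.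
  intros HU HV; rewrite (traceless_form U HU), (traceless_form V HV).
  rewrite !dN_frame_traceless, dlam_coef_y_offdiag by entrywise.
  unfold M2lower, M2upper; generalize (Cinv lam); intros; entrywise.
Qed.

Section ExtendedFrame.

Variables (u : R -> R -> R) (Q : R -> R -> C) (x y : R).

Definition alpha_x (lam : C) : M2 := M2add (Ulam lam u Q x y) (Vlam lam u Q x y).
Definition alpha_y (lam : C) : M2 := M2scal Ci (M2sub (Ulam lam u Q x y) (Vlam lam u Q x y)).

Lemma Ulam_traceless lam : M2tr (Ulam lam u Q x y) = RtoC 0.
Proof. unfold Ulam; generalize (rdz u x y); intros; entrywise. Qed.

Lemma Vlam_traceless lam : M2tr (Vlam lam u Q x y) = RtoC 0.
Proof. unfold Vlam; generalize (rdzb u x y); intros; entrywise. Qed.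

Lemma alpha_x_traceless lam : M2tr (alpha_x lam) = RtoC 0.
Proof.
  unfold alpha_x; rewrite (traceless_form _ (Ulam_traceless lam)), (traceless_form _ (Vlam_traceless lam)).
  entrywise.
Qed.

Lemma alpha_y_traceless lam : M2tr (alpha_y lam) = RtoC 0.
Proof.
  unfold alpha_y; rewrite (traceless_form _ (Ulam_traceless lam)), (traceless_form _ (Vlam_traceless lam)).
  entrywise.
Qed.

Lemma Ulam_split lam : Ulam lam u Q x y =
  M2add (Ulam (RtoC 1) u Q x y) (M2scal (Cminus lam (RtoC 1)) (M2lower (Ulam (RtoC 1) u Q x y))).
Proof.
  unfold Ulam, M2lower; generalize (rdz u x y) (Q x y) (emu2 u x y) (eu2 u x y); intros; entrywise.
Qed.

Lemma Vlam_split lam : Vlam lam u Q x y =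
  M2add (Vlam (RtoC 1) u Q x y) (M2scal (Cminus (Cinv lam) (RtoC 1)) (M2upper (Vlam (RtoC 1) u Q x y))).
Proof.
  unfold Vlam, M2upper; rewrite Cinv_1.
  generalize (Cinv lam) (rdzb u x y) (Q x y) (emu2 u x y) (eu2 u x y); intros; entrywise.
Qed.

Lemma dlam_coef_x_extended lam :
  dlam_coef_x lam Nframe (dN_frame (alpha_x (RtoC 1))) (dN_frame (alpha_y (RtoC 1))) =
  M2sub (alpha_x lam) (alpha_x (RtoC 1)).
Proof.
  unfold alpha_x, alpha_y.
  rewrite dlam_coef_x_frame by (apply Ulam_traceless || apply Vlam_traceless).
  rewrite (Ulam_split lam), (Vlam_split lam).
  generalize (Ulam (RtoC 1) u Q x y) (Vlam (RtoC 1) u Q x y); intros; unfold M2lower, M2upper; entrywise.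
Qed.

Lemma dlam_coef_y_extended lam :
  dlam_coef_y lam Nframe (dN_frame (alpha_x (RtoC 1))) (dN_frame (alpha_y (RtoC 1))) =
  M2sub (alpha_y lam) (alpha_y (RtoC 1)).
Proof.
  unfold alpha_x, alpha_y.
  rewrite dlam_coef_y_frame by (apply Ulam_traceless || apply Vlam_traceless).
  rewrite (Ulam_split lam), (Vlam_split lam).
  generalize (Ulam (RtoC 1) u Q x y) (Vlam (RtoC 1) u Q x y); intros; unfold M2lower, M2upper; entrywise.
Qed.

End ExtendedFrame.

Lemma inv_mul_dx (G : Field) x y V W :
  M2mul (M2inv (G x y)) (dz G x y) = V -> M2mul (M2inv (G x y)) (dzb G x y) = W ->
  M2mul (M2inv (G x y)) (dx G x y) = M2add V W.
Proof. intros <- <-; unfold dz, dzb; generalize (M2inv (G x y)) (dx G x y) (dy G x y); intros; entrywise. Qed.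

Lemma inv_mul_dy (G : Field) x y V W :
  M2mul (M2inv (G x y)) (dz G x y) = V -> M2mul (M2inv (G x y)) (dzb G x y) = W ->
  M2mul (M2inv (G x y)) (dy G x y) = M2scal Ci (M2sub V W).
Proof. intros <- <-; unfold dz, dzb; generalize (M2inv (G x y)) (dx G x y) (dy G x y); intros; entrywise. Qed.

Lemma gauge_conj_identity F P L s sx : M2det F = RtoC 1 -> M2tr P = RtoC 0 ->
  V2add sx (M2app (M2conj F (M2sub L P)) s) =
  M2app F (V2add (V2add (M2app (M2adj (M2mul F P)) s) (M2app (M2adj F) sx))
                 (M2app L (M2app (M2adj F) s))).
Proof.
  intros HF HP; rewrite (traceless_form P HP).
  transitivity (V2add (M2app (M2mul F (M2adj F)) sx)
                      (M2app (M2conj F (M2sub L (mkM2 (a11 P) (a12 P) (a21 P) (Copp (a11 P))))) s)).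
  - rewrite M2mul_adj_r, HF; entrywise.
  - entrywise.
Qed.

Section OnOpenSet.

Variable U : R -> R -> Prop.
Hypothesis U_open : open2 U.

Lemma dx_eq_on_open (G H : Field) x y D : U x y -> (forall x y, U x y -> H x y = G x y) ->
  is_derive_M2 (fun t => H t y) x D -> dx G x y = D.
Proof.
  intros Hxy HG HD.
  assert (E : is_derive_M2 (fun t => G t y) x D).
  { eapply is_derive_M2_ext_loc; [| exact HD].
    eapply filter_imp; [| exact (open2_locally_x U x y U_open Hxy)]; auto. }
  destruct E as (e1 & e2 & e3 & e4); unfold dx.
  now rewrite (derC_unique _ _ _ e1), (derC_unique _ _ _ e2), (derC_unique _ _ _ e3),
    (derC_unique _ _ _ e4); destruct D.
Qed.

Lemma dy_eq_on_open (G H : Field) x y D : U x y -> (forall x y, U x y -> H x y = G x y) ->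
  is_derive_M2 (fun t => H x t) y D -> dy G x y = D.
Proof.
  intros Hxy HG HD.
  assert (E : is_derive_M2 (fun t => G x t) y D).
  { eapply is_derive_M2_ext_loc; [| exact HD].
    eapply filter_imp; [| exact (open2_locally_y U x y U_open Hxy)]; auto. }
  destruct E as (e1 & e2 & e3 & e4); unfold dy.
  now rewrite (derC_unique _ _ _ e1), (derC_unique _ _ _ e2), (derC_unique _ _ _ e3),
    (derC_unique _ _ _ e4); destruct D.
Qed.

Lemma sdx_eq_on_open (s r : Sect) x y d : U x y -> (forall x y, U x y -> r x y = s x y) ->
  is_derive_V2 (fun t => r t y) x d -> sdx s x y = d.
Proof.
  intros Hxy Hs Hd.
  assert (E : is_derive_V2 (fun t => s t y) x d).
  { eapply is_derive_V2_ext_loc; [| exact Hd].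
    eapply filter_imp; [| exact (open2_locally_x U x y U_open Hxy)]; auto. }
  destruct E as (e1 & e2); unfold sdx.
  now rewrite (derC_unique _ _ _ e1), (derC_unique _ _ _ e2); destruct d.
Qed.

Lemma sdy_eq_on_open (s r : Sect) x y d : U x y -> (forall x y, U x y -> r x y = s x y) ->
  is_derive_V2 (fun t => r x t) y d -> sdy s x y = d.
Proof.
  intros Hxy Hs Hd.
  assert (E : is_derive_V2 (fun t => s x t) y d).
  { eapply is_derive_V2_ext_loc; [| exact Hd].
    eapply filter_imp; [| exact (open2_locally_y U x y U_open Hxy)]; auto. }
  destruct E as (e1 & e2); unfold sdy.
  now rewrite (derC_unique _ _ _ e1), (derC_unique _ _ _ e2); destruct d.
Qed.


Lemma dx_agree_on_open (G H : Field) x y : U x y -> (forall x y, U x y -> H x y = G x y) ->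
  ex_dx H x y -> dx G x y = dx H x y.
Proof. intros Hxy HG HH; apply (dx_eq_on_open G H); auto using is_derive_M2_dx. Qed.

Lemma dy_agree_on_open (G H : Field) x y : U x y -> (forall x y, U x y -> H x y = G x y) ->
  ex_dy H x y -> dy G x y = dy H x y.
Proof. intros Hxy HG HH; apply (dy_eq_on_open G H); auto using is_derive_M2_dy. Qed.

Variables (N F : Field).
Hypothesis N_frame : forall x y, U x y -> N x y = M2conj (F x y) Nframe.

Lemma gauss_map_dx x y P : U x y -> ex_dx F x y -> dx F x y = M2mul (F x y) P ->
  dx N x y = M2conj (F x y) (dN_frame P).
Proof.
  intros Hxy HFx EFx; unfold dN_frame; rewrite <- M2conj_derivative_frame, <- EFx.
  apply (dx_eq_on_open N (fun x y => M2conj (F x y) Nframe)).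
  - exact Hxy.
  - intros a b Hab; symmetry; apply N_frame, Hab.
  - apply (is_derive_M2_conj (fun t => F t y)), is_derive_M2_dx, HFx.
Qed.

Lemma gauss_map_dy x y P : U x y -> ex_dy F x y -> dy F x y = M2mul (F x y) P ->
  dy N x y = M2conj (F x y) (dN_frame P).
Proof.
  intros Hxy HFy EFy; unfold dN_frame; rewrite <- M2conj_derivative_frame, <- EFy.
  apply (dy_eq_on_open N (fun x y => M2conj (F x y) Nframe)).
  - exact Hxy.
  - intros a b Hab; symmetry; apply N_frame, Hab.
  - apply (is_derive_M2_conj (fun t => F x t)), is_derive_M2_dy, HFy.
Qed.

Hypothesis F_det1 : forall x y, U x y -> M2det (F x y) = RtoC 1.

Lemma sdx_inv_frame (s : Sect) x y : U x y -> ex_dx F x y -> ex_sd s x y ->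
  sdx (fun a b => M2app (M2inv (F a b)) (s a b)) x y =
  V2add (M2app (M2adj (dx F x y)) (s x y)) (M2app (M2adj (F x y)) (sdx s x y)).
Proof.
  intros Hxy HFx Hs.
  apply (sdx_eq_on_open _ (fun a b => M2app (M2adj (F a b)) (s a b))).
  - exact Hxy.
  - intros a b Hab; rewrite M2inv_det1 by (apply F_det1, Hab); reflexivity.
  - apply (is_derive_V2_app (fun t => M2adj (F t y)) (fun t => s t y)).
    + apply (is_derive_M2_adj (fun t => F t y)), is_derive_M2_dx, HFx.
    + apply is_derive_V2_sdx, Hs.
Qed.

Lemma sdy_inv_frame (s : Sect) x y : U x y -> ex_dy F x y -> ex_sd s x y ->
  sdy (fun a b => M2app (M2inv (F a b)) (s a b)) x y =
  V2add (M2app (M2adj (dy F x y)) (s x y)) (M2app (M2adj (F x y)) (sdy s x y)).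
Proof.
  intros Hxy HFy Hs.
  apply (sdy_eq_on_open _ (fun a b => M2app (M2adj (F a b)) (s a b))).
  - exact Hxy.
  - intros a b Hab; rewrite M2inv_det1 by (apply F_det1, Hab); reflexivity.
  - apply (is_derive_V2_app (fun t => M2adj (F x t)) (fun t => s x t)).
    + apply (is_derive_M2_adj (fun t => F x t)), is_derive_M2_dy, HFy.
    + apply is_derive_V2_sdy, Hs.
Qed.

End OnOpenSet.

Theorem lemma4p4
  (U : R -> R -> Prop) (f N F : Field) (u : R -> R -> R) (Fl : C -> Field) :
  open2 U ->
  (forall x y, U x y ->
     ex_dx f x y /\ ex_dy f x y /\ ex_dx (dx f) x y /\ ex_dy (dx f) x y /\
     ex_dx (dy f) x y /\ ex_dy (dy f) x y /\
     ex_derive (fun t => u t y) x /\ ex_derive (fun t => u x t) y /\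
     ex_dx F x y /\ ex_dy F x y) ->
  (forall x y, U x y -> isImH (f x y)) ->
  (forall x y, U x y ->
     isSU2 (F x y) /\
     M2scal (emu2 u x y) (dx f x y) = M2scal (Copp Ci) (M2mul (M2mul (F x y) sigma1) (M2inv (F x y))) /\
     M2scal (emu2 u x y) (dy f x y) = M2scal (Copp Ci) (M2mul (M2mul (F x y) sigma2) (M2inv (F x y))) /\
     N x y = M2scal (Copp Ci) (M2mul (M2mul (F x y) sigma3) (M2inv (F x y)))) ->
  (forall x y, U x y -> meanH f N u x y = RtoC 1) ->
  (forall lam x y, lam <> RtoC 0 -> U x y ->
     M2det (Fl lam x y) <> RtoC 0 /\ ex_dx (Fl lam) x y /\ ex_dy (Fl lam) x y /\
     M2mul (M2inv (Fl lam x y)) (dz (Fl lam) x y) = Ulam lam u (hopfQ f N) x y /\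
     M2mul (M2inv (Fl lam x y)) (dzb (Fl lam) x y) = Vlam lam u (hopfQ f N) x y) ->
  (forall x y, U x y -> Fl (RtoC 1) x y = F x y) ->
  forall lam, lam <> RtoC 0 ->
  forall (s : Sect) x y, U x y -> ex_sd s x y ->
    dlam_conn N lam s x y = gauge_conn F (Fl lam) s x y.
Proof.
  intros HU Hreg _ HF _ HFl HF1 lam Hlam s x y Hxy Hs.
  set (Q := hopfQ f N) in HFl.
  destruct (Hreg x y Hxy) as (_ & _ & _ & _ & _ & _ & _ & _ & HFx & HFy).
  assert (Hdet : forall x y, U x y -> M2det (F x y) = RtoC 1) by (intros a b Hab; apply HF, Hab).
  assert (HN : forall x y, U x y -> N x y = M2conj (F x y) Nframe).
  { intros a b Hab; destruct (HF a b Hab) as ([_ Hd] & _ & _ & ->); apply gauss_map_frame, Hd. }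
  assert (H1 : RtoC 1 <> RtoC 0) by (intro E; injection E; lra).
  destruct (HFl _ x y H1 Hxy) as (_ & H1x & H1y & HU1 & HV1).
  destruct (HFl lam x y Hlam Hxy) as (_ & _ & _ & HUl & HVl).
  assert (EFx : dx F x y = M2mul (F x y) (alpha_x u Q x y (RtoC 1))).
  { apply M2mul_inv_det1; [apply Hdet, Hxy |].
    rewrite (dx_agree_on_open U HU F (Fl (RtoC 1))), <- (HF1 x y Hxy) by auto.
    apply (inv_mul_dx _ _ _ _ _ HU1 HV1). }
  assert (EFy : dy F x y = M2mul (F x y) (alpha_y u Q x y (RtoC 1))).
  { apply M2mul_inv_det1; [apply Hdet, Hxy |].
    rewrite (dy_agree_on_open U HU F (Fl (RtoC 1))), <- (HF1 x y Hxy) by auto.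
    apply (inv_mul_dy _ _ _ _ _ HU1 HV1). }
  rewrite dlam_conn_coef; unfold gauge_conn; cbv zeta.
  rewrite (sdx_inv_frame U HU F Hdet), (sdy_inv_frame U HU F Hdet) by assumption.
  rewrite (inv_mul_dx _ _ _ _ _ HUl HVl), (inv_mul_dy _ _ _ _ _ HUl HVl), M2inv_det1 by auto.
  rewrite (gauss_map_dx U HU N F HN x y _ Hxy HFx EFx), (gauss_map_dy U HU N F HN x y _ Hxy HFy EFy), HN by auto.
  rewrite dlam_coef_x_conj, dlam_coef_y_conj, dlam_coef_x_extended, dlam_coef_y_extended, EFx, EFy by auto.
  f_equal; apply gauge_conj_identity; auto using alpha_x_traceless, alpha_y_traceless.
Qed.
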